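(* Let $A$ be an integral domain with fraction field $K$ and spectrum $S$. Let $F \in A[Y]$ be a nonconstant polynomial, and put $X_F = \mathrm{Spec}(A[Y]/(F))$. (1) For a prime ideal $\mathfrak p$ of $A$, the following are equivalent: (i) $\mathfrak p \in \mathrm{Rel}(X_F/S)$; (ii) the image of $F$ in $\kappa(\mathfrak p)[Y]$ has a root in $\kappa(\mathfrak p)$; (iii) there exist $g \in A \setminus \mathfrak p$ and $b \in A_g$ such that $F(b) \in \mathfrak p A_{\mathfrak p}$. (2) The following are equivalent: (i) $\mathrm{Rel}(X_F/S)$ is dense in $S$; (ii) for every nonzero $g \in A$, there exist $u \in A$ and $b \in A_{ug}$ such that $F(b) \notin A_{ug}^\times$; (iii) for every nonzero $g \in A$, there exist $u \in A$, $b \in A_{ug}$ and $\mathfrak p \in D(ug)$ such that $F(b) \in \mathfrak p A_{\mathfrak p}$.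
   Context: For a morphism $f : X \to S$, $\mathrm{Rel}(f)$ (also written $\mathrm{Rel}(X/S)$) is the set of $f(x)$, $x \in X$, such that $\kappa(f(x)) = \kappa(x)$ (trivial residue field extension). For $t \in A$, $A_t$ is the localization at the powers of $t$, and $D(t) = \mathrm{Spec}(A_t) \subset \mathrm{Spec}(A)$. *)

From HB Require Import structures.
From mathcomp Require Import all_boot all_algebra.
From mathcomp Require Import boolp.
From mathcomp Require Export ring_quotient fraction generic_quotient.

Set Implicit Arguments.
Unset Strict Implicit.
Unset Printing Implicit Defensive.

Import GRing.Theory.
Local Open Scope ring_scope.
Local Open Scope quotient_scope.

Notation tofrac := (@FracField.tofrac _).
Notation "x %:F" := (@FracField.tofrac _ x) (format "x %:F").

(* Quotient R/I by a prime ideal as an integral domain (so that its    *)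
(* fraction field, the residue field kappa(I), can be formed).         *)
Section PrimeQuotientDomain.
Variables (R : comNzRingType) (I : prime_idealr R).

Definition pquot := {ideal_quot I}.
HB.instance Definition _ := GRing.ComNzRing.on pquot.

Definition pq_unit : {pred pquot} := fun x => `[< exists y : pquot, y * x = 1 >].
Definition pq_inv (x : pquot) : pquot :=
  match pselect (exists y : pquot, y * x = 1) with
  | left h => projT1 (cid h)
  | right _ => x
  end.

Lemma pq_mulVx : {in pq_unit, left_inverse 1 pq_inv *%R}.
Proof.
move=> x /asboolP hx; rewrite /pq_inv; case: pselect => // h.
by case: (cid h).
Qed.

Lemma pq_unitPl : forall x y : pquot, y * x = 1 -> pq_unit x.
Proof. by move=> x y h; apply/asboolP; exists y. Qed.

Lemma pq_invr_out : {in [predC pq_unit], pq_inv =1 id}.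
Proof.
move=> x; rewrite inE => /asboolPn hx; rewrite /pq_inv.
by case: pselect.
Qed.

HB.instance Definition _ :=
  GRing.ComNzRing_hasMulInverse.Build pquot pq_mulVx pq_unitPl pq_invr_out.

Lemma pq_integral : GRing.integral_domain_axiom pquot.
Proof. move=> x y; exact: Quotient.rquot_IdomainAxiom. Qed.

HB.instance Definition _ := GRing.ComUnitRing_isIntegral.Build pquot pq_integral.

Definition kappa := {fraction pquot}.

Definition to_kappa (a : R) : kappa := @FracField.tofrac pquot (\pi_({ideal_quot I}) a).

End PrimeQuotientDomain.

(* Points of X_F = Spec(A[Y]/(F)) are the primes q of A[Y] with F in q;*)
(* the structure map sends q to its contraction q ∩ A.                 *)
Section Rel.
Variable A : idomainType.

Definition lies_over (q : prime_idealr {poly A}) (p : prime_idealr A) : Prop :=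
  forall a : A, (a%:P \in q) = (a \in p).

Definition trivial_residue_ext (q : prime_idealr {poly A}) (p : prime_idealr A)
  : Prop :=
  forall z : kappa q, exists a s : A,
    s \notin p /\ z = to_kappa q a%:P / to_kappa q s%:P.

Definition Rel (F : {poly A}) (p : prime_idealr A) : Prop :=
  exists q : prime_idealr {poly A},
    [/\ F \in q, lies_over q p & trivial_residue_ext q p].

Definition res_has_root (F : {poly A}) (p : prime_idealr A) : Prop :=
  exists x : kappa p, root (map_poly (to_kappa p) F) x.

(* Zariski topology on S: the open set S \ V(E) for E ⊆ A *)
Definition zopen (E : A -> Prop) (p : prime_idealr A) : Prop :=
  exists e, E e /\ e \notin p.

Definition zdense (P : prime_idealr A -> Prop) : Prop :=
  forall E : A -> Prop, (exists p, zopen E p) -> exists p, zopen E p /\ P p.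

(* Localizations are realised inside the fraction field K = {fraction A}. *)
Local Notation K := {fraction A}.

(* For t = 0, A_0 is the zero
   ring, which does not embed in K; we then declare nothing to be in A_0
   (the clauses of the theorem using A_{ug} are false for
   ug = 0 in the original statement as well). *)
Definition in_loc (t : A) (b : K) : Prop :=
  t != 0 /\ exists (a : A) (n : nat), b = a%:F / (t ^+ n)%:F.

Definition loc_unit (t : A) (x : K) : Prop :=
  in_loc t x /\ exists y, in_loc t y /\ x * y = 1.

Definition in_pAp (p : prime_idealr A) (x : K) : Prop :=
  exists a s : A, [/\ a \in p, s \notin p & x = a%:F / s%:F].

Definition evalK (F : {poly A}) (b : K) : K := (map_poly (@FracField.tofrac A) F).[b].

End Rel.

(* Part (1): a point q of X_F over p with kappa(q) = kappa(p) amounts to a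
   kappa(p)-rational root of F: the image of Y in kappa(q) is such a root, and
   conversely a root a/s gives q as the kernel of A[Y] -> kappa(p), Y |-> a/s.
   Clearing denominators, a root a/s of F modulo p means s \notin p and
   s^(deg F) F(a/s) \in p, which is condition (iii) with g = s.
   Part (2): Rel is dense iff it meets every D(g), i.e. by (1) iff (iii) holds.
   An element of A_t lies in pA_p for some p in D(t) iff it is not a unit of
   A_t; the nontrivial direction is Krull's lemma that an ideal avoiding the
   powers of t lies in a prime avoiding them, proved with Zorn's lemma. *)

From HB Require Import structures.
From mathcomp Require Import all_boot all_algebra.
From mathcomp Require Import boolp ring.
From mathcomp Require classical_sets.

Set Implicit Arguments.
Unset Strict Implicit.
Unset Printing Implicit Defensive.

Import GRing.Theory.
Local Open Scope ring_scope.
Local Open Scope quotient_scope.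

Lemma fraction_repr (R : idomainType) (x : {fraction R}) :
  exists a b : R, b != 0 /\ x = a%:F / b%:F.
Proof.
rewrite -[x]reprK; set r := repr x.
have d0 : \d_r != 0 := denom_ratioP r.
exists \n_r, \d_r; split=> //.
apply: (@mulIf _ (\d_r)%:F); first by rewrite tofrac_eq0.
rewrite mulfVK ?tofrac_eq0 //; unlock FracField.tofrac.
rewrite -[_ * _]FracField.pi_mul; apply/eqmodP.
rewrite /= FracField.equivfE /FracField.mulf /=.
by rewrite !numden_Ratio ?mulf_neq0 ?oner_neq0 // !mulr1 mulrC.
Qed.

Section PrimeComplement.
Variables (R : comNzRingType) (p : prime_idealr R).

Lemma notin_primeM s t : s \notin p -> t \notin p -> s * t \notin p.
Proof. by move=> sp tp; rewrite prime_idealrM negb_or sp tp. Qed.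

Lemma notin_primeX s n : s \notin p -> s ^+ n \notin p.
Proof.
move=> sp; elim: n => [|n IHn]; first by rewrite expr0 idealr1.
by rewrite exprS notin_primeM.
Qed.

Lemma notin_prime_neq0 s : s \notin p -> s != 0.
Proof. by apply: contra => /eqP ->; exact: idealr0. Qed.

End PrimeComplement.

Record prime_pred (R : comNzRingType) (P : R -> Prop) : Prop := PrimePred {
  prime_pred0 : P 0;
  prime_pred1 : ~ P 1;
  prime_predD : forall x y, P x -> P y -> P (x + y);
  prime_predMl : forall a x, P x -> P (a * x);
  prime_predM : forall x y, P (x * y) -> P x \/ P y }.

Section PrimeOfPred.
Variables (R : comNzRingType) (P : R -> Prop) (hP : prime_pred P).

Definition prime_of_pred_mem : {pred R} := fun x => `[< P x >].

Lemma prime_of_pred_ideal : idealr_closed prime_of_pred_mem.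
Proof.
split; first exact/asboolP/(prime_pred0 hP).
  exact/asboolP/(prime_pred1 hP).
move=> a u v /asboolP Pu /asboolP Pv; apply/asboolP.
by apply: (prime_predD hP) => //; apply: (prime_predMl hP).
Qed.

HB.instance Definition _ := isIdealr.Build R prime_of_pred_mem prime_of_pred_ideal.

Lemma prime_of_pred_prime : prime_idealr_closed prime_of_pred_mem.
Proof.
by move=> u v /asboolP/(prime_predM hP) [] ?; apply/orP; [left|right]; apply/asboolP.
Qed.

HB.instance Definition _ :=
  isPrimeIdealrClosed.Build R prime_of_pred_mem prime_of_pred_prime.

Definition prime_of_pred : prime_idealr R :=
  PrimeIdealr.clone R prime_of_pred_mem _.

Lemma prime_of_predE x : (x \in prime_of_pred) = `[< P x >].
Proof. by []. Qed.

End PrimeOfPred.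

Section KernelPrime.
Variables (R : comNzRingType) (L : idomainType) (f : {rmorphism R -> L}).

Lemma kernel_prime_pred : prime_pred (fun x => f x = 0).
Proof.
split=> [||x y|a x|x y]; first exact: rmorph0.
- by rewrite rmorph1; apply/eqP; exact: oner_neq0.
- by move=> fx fy; rewrite rmorphD fx fy addr0.
- by move=> fx; rewrite rmorphM fx mulr0.
- by rewrite rmorphM => /eqP; rewrite mulf_eq0 => /orP[] /eqP; [left|right].
Qed.

Definition kernel_prime := prime_of_pred kernel_prime_pred.

Lemma kernel_primeE x : (x \in kernel_prime) = (f x == 0).
Proof. by rewrite prime_of_predE; apply/asboolP/eqP. Qed.

End KernelPrime.

Section PrimeAvoidingPowers.
Variables (R : comNzRingType) (N w : R).

Record avoiding_ideal (X : R -> Prop) : Prop := AvoidingIdeal {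
  avoidingD : forall x y, X x -> X y -> X (x + y);
  avoidingMl : forall a x, X x -> X (a * x);
  avoidingN : X N;
  avoiding_powers : forall k, ~ X (w ^+ k) }.

Lemma avoiding_ideal0 X : avoiding_ideal X -> X 0.
Proof. by move=> [_ XM XN _]; rewrite -(mul0r N); apply: XM. Qed.

Hypothesis N_w : forall c k, N * c <> w ^+ k.

Lemma avoiding_ideal_principal : avoiding_ideal (fun x => exists c, x = N * c).
Proof.
split.
- by move=> _ _ [c ->] [d ->]; exists (c + d); rewrite mulrDr.
- by move=> a _ [c ->]; exists (a * c); rewrite mulrCA.
- by exists 1; rewrite mulr1.
- by move=> k [c /esym/N_w].
Qed.

Lemma maximal_avoiding_ideal : exists M, avoiding_ideal M /\
  forall B, classical_sets.proper M B -> ~ avoiding_ideal B.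
Proof.
(* The empty set is the union of the empty chain, hence the nonemptiness guard. *)
pose P X := (exists x, X x) -> avoiding_ideal X.
have [M [PM M_max]] : exists M, P M /\
    forall B, classical_sets.proper M B -> ~ P B.
  apply: classical_sets.Zorn_bigcup => C CP C_chain [x [X CX Xx]].
  have av Y y : C Y -> Y y -> avoiding_ideal Y.
    by move=> CY Yy; apply: CP CY _; exists y.
  split.
  - move=> a b [Y CY Ya] [Z CZ Zb].
    have [YZ|ZY] := C_chain Y Z CY CZ.
      by exists Z => //; apply: (avoidingD (av Z b CZ Zb)) => //; apply: YZ.
    by exists Y => //; apply: (avoidingD (av Y a CY Ya)) => //; apply: ZY.
  - by move=> r a [Y CY Ya]; exists Y => //; apply: (avoidingMl (av Y a CY Ya)).
  - by exists X => //; apply: (avoidingN (av X x CX Xx)).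
  - by move=> k [Y CY Yk]; apply: (avoiding_powers (av Y _ CY Yk)) Yk.
have M_ne : exists x, M x.
  apply: contrapT => M0; apply: (M_max _ _ (fun _ => avoiding_ideal_principal)).
  split=> [t Mt|MN]; first by case: M0; exists t.
  by apply: M0; exists N; apply: MN; exists 1; rewrite mulr1.
exists M; split=> [|B MB avB]; first exact: PM M_ne.
by apply: (M_max B MB) => _.
Qed.

Variable M : R -> Prop.
Hypotheses (M_avoiding : avoiding_ideal M)
  (M_maximal : forall B, classical_sets.proper M B -> ~ avoiding_ideal B).

Lemma maximal_avoiding_extend z : ~ M z ->
  exists k m r, M m /\ w ^+ k = m + r * z.
Proof.
move=> Mz; apply: contrapT => no_power.
pose B t := exists m r, M m /\ t = m + r * z.
apply: (M_maximal (B := B)).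
  split=> [t Mt|BM]; first by exists t, 0; rewrite mul0r addr0.
  apply: Mz; apply: BM; exists 0, 1; rewrite add0r mul1r.
  by split=> //; apply: avoiding_ideal0.
have [MD MM MN _] := M_avoiding.
split.
- move=> _ _ [m1 [r1 [M1 ->]]] [m2 [r2 [M2 ->]]]; exists (m1 + m2), (r1 + r2).
  by split; [exact: MD | rewrite mulrDl addrACA].
- move=> a _ [m [r [Mm ->]]]; exists (a * m), (a * r).
  by split; [exact: MM | rewrite mulrDr mulrA].
- by exists N, 0; rewrite mul0r addr0.
- by move=> k [m [r [Mm e]]]; apply: no_power; exists k, m, r.
Qed.

Lemma maximal_avoiding_prime x y : M (x * y) -> M x \/ M y.
Proof.
move=> Mxy; apply: contrapT => /not_orP[Mx My].
have [i [m1 [r1 [M1 e1]]]] := maximal_avoiding_extend Mx.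
have [j [m2 [r2 [M2 e2]]]] := maximal_avoiding_extend My.
have [MD MM _ Mw] := M_avoiding.
apply: (Mw (i + j)%N).
have -> : w ^+ (i + j) = (m2 + r2 * y) * m1 + (r1 * x) * m2 + (r1 * r2) * (x * y).
  by rewrite exprD e1 e2; ring.
exact: MD _ _ (MD _ _ (MM _ _ M1) (MM _ _ M2)) (MM _ _ Mxy).
Qed.

End PrimeAvoidingPowers.

Lemma prime_avoiding_powers (R : comNzRingType) (N w : R) :
  (forall c k, N * c <> w ^+ k) ->
  exists p : prime_idealr R, N \in p /\ w \notin p.
Proof.
move=> N_w; have [M [M_av M_max]] := maximal_avoiding_ideal N_w.
have [MD MM MN Mw] := M_av.
have M_prime : prime_pred M.
  split=> //; first exact: avoiding_ideal0 M_av.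
    by rewrite -(expr0 w); apply: Mw.
  exact: maximal_avoiding_prime M_av M_max.
exists (prime_of_pred M_prime); rewrite !prime_of_predE.
by split; [apply/asboolP | apply/asboolPn; rewrite -(expr1 w); apply: Mw].
Qed.

Section ResidueField.
Variables (R : comNzRingType) (I : prime_idealr R).

Lemma to_kappa_is_zmod_morphism : zmod_morphism (to_kappa I).
Proof. by move=> x y; rewrite /to_kappa !rmorphB. Qed.

HB.instance Definition _ :=
  GRing.isZmodMorphism.Build R (kappa I) (to_kappa I) to_kappa_is_zmod_morphism.

Lemma to_kappa_is_monoid_morphism : monoid_morphism (to_kappa I).
Proof. by split=> [|x y]; rewrite /to_kappa ?rmorph1 ?rmorphM. Qed.

HB.instance Definition _ :=
  GRing.isMonoidMorphism.Build R (kappa I) (to_kappa I) to_kappa_is_monoid_morphism.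

Lemma to_kappa_eq0 a : (to_kappa I a == 0) = (a \in I).
Proof.
by rewrite /to_kappa tofrac_eq0 -(rmorph0 (\pi_(pquot I))) -Quotient.idealrBE subr0.
Qed.

Lemma kappa_repr (z : kappa I) :
  exists a s, s \notin I /\ z = to_kappa I a / to_kappa I s.
Proof.
have [x [y [y0 ->]]] := fraction_repr z.
exists (repr x), (repr y); rewrite -to_kappa_eq0 /to_kappa !reprK.
by rewrite tofrac_eq0.
Qed.

End ResidueField.

Definition homog (R : comNzRingType) (F : {poly R}) (a s : R) : R :=
  \sum_(i < size F) F`_i * a ^+ i * s ^+ ((size F).-1 - i).

Lemma horner_map_div (R : comNzRingType) (L : fieldType) (f : {rmorphism R -> L})
    (F : {poly R}) (a s : R) : f s != 0 ->
  (map_poly f F).[f a / f s] = f (homog F a s) / f s ^+ (size F).-1.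
Proof.
move=> fs0; rewrite (horner_coef_wide _ (size_poly _ _)) rmorph_sum mulr_suml.
apply: eq_bigr => -[i /= lt_iF] _.
have le_i : (i <= (size F).-1)%N by rewrite -ltnS prednK // (leq_ltn_trans _ lt_iF).
rewrite coef_map !rmorphM !rmorphXn -{2}(subnK le_i) exprD invfM.
by rewrite exprMn exprVn !mulrA mulfK ?expf_neq0.
Qed.

Lemma root_map_div (R : comNzRingType) (L : fieldType) (f : {rmorphism R -> L})
    (F : {poly R}) (a s : R) : f s != 0 ->
  root (map_poly f F) (f a / f s) = (f (homog F a s) == 0).
Proof.
move=> fs0; rewrite rootE horner_map_div // mulf_eq0 invr_eq0 expf_eq0.
by rewrite (negPf fs0) andbF orbF.
Qed.

Section Localization.
Variable A : idomainType.
Implicit Types (t : A) (x : {fraction A}).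

Lemma evalK_div (F : {poly A}) (a s : A) : s != 0 ->
  evalK F (a%:F / s%:F) = (homog F a s)%:F / (s ^+ (size F).-1)%:F.
Proof. by move=> s0; rewrite /evalK horner_map_div ?tofrac_eq0 // rmorphXn. Qed.

Lemma in_locMr t u x : u != 0 -> in_loc t x -> in_loc (t * u) x.
Proof.
move=> u0 [t0 [a [n ->]]]; split; first by rewrite mulf_neq0.
exists (a * u ^+ n), n; rewrite exprMn !tofracM invfM mulrACA divff ?mulr1 //.
by rewrite tofrac_eq0 expf_neq0.
Qed.

Lemma in_loc_evalK (F : {poly A}) t x : in_loc t x -> in_loc t (evalK F x).
Proof.
move=> [t0 [a [n ->]]]; split=> //.
exists (homog F a (t ^+ n)), (n * (size F).-1)%N.
by rewrite evalK_div ?expf_neq0 // exprM.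
Qed.

Lemma in_pAp_loc_nonunit (p : prime_idealr A) t x :
  t \notin p -> in_pAp p x -> ~ loc_unit t x.
Proof.
move=> tp [c [d [cp dp ->]]] [_ [y [[_ [e [m ->]]]]]].
rewrite mulf_div -!tofracM => /divr1_eq/eqP; rewrite tofrac_eq => /eqP ce_dtm.
by have := notin_primeM dp (notin_primeX m tp); rewrite -ce_dtm mulrC idealMr.
Qed.

Lemma loc_nonunit_in_pAp t x : in_loc t x -> ~ loc_unit t x ->
  exists p : prime_idealr A, t \notin p /\ in_pAp p x.
Proof.
move=> xt x_nonunit; have [t0 [N [m x_eq]]] := xt.
have N_t : forall c k, N * c <> t ^+ k.
  move=> c k Nc_tk; apply: x_nonunit; split=> //.
  exists ((c * t ^+ m)%:F / (t ^+ k)%:F).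
  split; first by split=> //; exists (c * t ^+ m), k.
  rewrite x_eq mulf_div -!tofracM mulrA Nc_tk [t ^+ k * _]mulrC divff //.
  by rewrite tofrac_eq0 mulf_neq0 ?expf_neq0.
have [p [Np tp]] := prime_avoiding_powers N_t.
by exists p; split=> //; exists N, (t ^+ m); rewrite notin_primeX.
Qed.

End Localization.

Section ResidueRoots.
Variables (A : idomainType) (F : {poly A}) (p : prime_idealr A).

Definition has_root_mod := exists a s : A, s \notin p /\ homog F a s \in p.

Lemma res_has_rootP : res_has_root F p <-> has_root_mod.
Proof.
split=> [[x]|[a [s [sp Fas]]]].
  have [a [s [sp ->]]] := kappa_repr x.
  by rewrite root_map_div ?to_kappa_eq0 // => Fas; exists a, s.
by exists (to_kappa p a / to_kappa p s); rewrite root_map_div ?to_kappa_eq0.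
Qed.

Lemma root_mod_locP : has_root_mod <->
  exists g, g \notin p /\ exists b, in_loc g b /\ in_pAp p (evalK F b).
Proof.
split=> [[a [s [sp Fas]]]|[g [gp [b [[g0 [a [n ->]]] [c [t [cp tp]]]]]]]].
  have s0 := notin_prime_neq0 sp.
  exists s; split=> //; exists (a%:F / s%:F).
  split; first by split=> //; exists a, 1%N.
  rewrite evalK_div //; exists (homog F a s), (s ^+ (size F).-1).
  by rewrite notin_primeX.
have gnp := notin_primeX n gp; have gn0 := notin_prime_neq0 gnp.
rewrite evalK_div // => /eqP.
rewrite eqr_div ?tofrac_eq0 ?expf_neq0 ?(notin_prime_neq0 tp) //.
rewrite -!tofracM tofrac_eq => /eqP Ft_cg.
exists a, (g ^+ n); split=> //.
have := idealMr ((g ^+ n) ^+ (size F).-1) cp.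
by rewrite mulrC -Ft_cg prime_idealrM (negPf tp) orbF.
Qed.

End ResidueRoots.

Section LyingOver.
Variables (A : idomainType) (p : prime_idealr A) (q : prime_idealr {poly A}).
Hypothesis q_over_p : lies_over q p.
Local Notation psi := (to_kappa q \o polyC).

Lemma lies_over_eq0 c : (psi c == 0) = (c \in p).
Proof. by rewrite /= to_kappa_eq0 q_over_p. Qed.

Variables (a s : A).
Hypotheses (s_notin_p : s \notin p) (X_div : to_kappa q 'X = psi a / psi s).

Lemma to_kappa_homog P : to_kappa q P = psi (homog P a s) / psi s ^+ (size P).-1.
Proof.
rewrite (poly_initial (to_kappa q)) /horner_morph.
(* The evaluation point is [to_kappa q 'X] seen through the rmorphism coercion. *)
by rewrite [X in _.[X]]/= X_div horner_map_div ?lies_over_eq0.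
Qed.

Lemma trivial_residue_ext_X : trivial_residue_ext q p.
Proof.
move=> z; have [P [Q [Qq ->]]] := kappa_repr z.
have Qp : homog Q a s \notin p.
  move: Qq; rewrite -to_kappa_eq0 -lies_over_eq0 to_kappa_homog.
  by apply: contra => /eqP ->; rewrite mul0r.
exists (homog P a s * s ^+ (size Q).-1), (homog Q a s * s ^+ (size P).-1); split.
  by rewrite notin_primeM ?notin_primeX.
rewrite (to_kappa_homog P) (to_kappa_homog Q).
rewrite !polyCM !rmorphM !(rmorphXn polyC) !rmorphXn /=.
by rewrite invf_div !mulf_div [_ ^+ (size P).-1 * _]mulrC.
Qed.

End LyingOver.

Section RelRoots.
Variables (A : idomainType) (F : {poly A}) (p : prime_idealr A).

Lemma root_mod_of_Rel : Rel F p -> has_root_mod F p.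
Proof.
move=> [q [Fq q_over_p triv]]; have [a [s [sp X_div]]] := triv (to_kappa q 'X).
have s0 : (to_kappa q \o polyC) s != 0 by rewrite (lies_over_eq0 q_over_p).
exists a, s; split=> //; rewrite -(lies_over_eq0 q_over_p).
move: Fq; rewrite -to_kappa_eq0 (to_kappa_homog q_over_p sp X_div).
by rewrite mulf_eq0 invr_eq0 expf_eq0 (negPf s0) andbF orbF.
Qed.

Lemma Rel_of_root_mod : has_root_mod F p -> Rel F p.
Proof.
move=> [a [s [sp Fas]]].
pose x := to_kappa p a / to_kappa p s.
have x_comm : commr_rmorph (to_kappa p) x by move=> c; apply: mulrC.
pose q := kernel_prime (horner_morph x_comm).
have q_over_p : lies_over q p.
  by move=> c; rewrite kernel_primeE /= horner_morphC to_kappa_eq0.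
exists q; split=> //.
  by rewrite kernel_primeE -rootE root_map_div ?to_kappa_eq0.
apply: (trivial_residue_ext_X (a := a) q_over_p sp).
have : s%:P * 'X - a%:P \in q.
  rewrite kernel_primeE rmorphB rmorphM /=.
  rewrite horner_morphC horner_morphX horner_morphC.
  by rewrite /x mulrC divfK ?subrr // to_kappa_eq0.
rewrite -to_kappa_eq0 rmorphB rmorphM subr_eq0 => /eqP sX_a.
have qs0 : (to_kappa q \o polyC) s != 0 by rewrite (lies_over_eq0 q_over_p).
by apply: (mulIf qs0); rewrite divfK // mulrC.
Qed.

Lemma Rel_root_modP : Rel F p <-> has_root_mod F p.
Proof. by split; [apply: root_mod_of_Rel | apply: Rel_of_root_mod]. Qed.

Lemma Rel_locP : Rel F p <->
  exists g, g \notin p /\ exists b, in_loc g b /\ in_pAp p (evalK F b).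
Proof. exact: iff_trans Rel_root_modP (root_mod_locP F p). Qed.

End RelRoots.

Section Density.
Variables (A : idomainType) (F : {poly A}).

Definition nonunit_criterion := forall g : A, g != 0 ->
  exists (u : A) (b : {fraction A}),
    in_loc (u * g) b /\ ~ loc_unit (u * g) (evalK F b).

Definition residual_root_criterion := forall g : A, g != 0 ->
  exists (u : A) (b : {fraction A}) (p : prime_idealr A),
    [/\ in_loc (u * g) b, u * g \notin p & in_pAp p (evalK F b)].

Lemma residual_root_zdense : residual_root_criterion -> zdense (Rel F).
Proof.
move=> hF E [p0 [e [Ee ep]]].
have [u [b [p [bug ugp Fb]]]] := hF e (notin_prime_neq0 ep).
exists p; split.
  by exists e; split=> //; apply: contra ugp; apply: idealMr.
by apply/Rel_locP; exists (u * e); split=> //; exists b.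
Qed.

Lemma zdense_residual_root : zdense (Rel F) -> residual_root_criterion.
Proof.
move=> dense g g0.
have g_open : exists p, zopen (fun e => e = g) p.
  by exists (kernel_prime (@idfun A)); exists g; rewrite kernel_primeE.
have [p [[_ [-> gp]] /Rel_locP [u [up [b [bu Fb]]]]]] := dense _ g_open.
by exists u, b, p; split; [apply: in_locMr | rewrite notin_primeM |].
Qed.

Lemma residual_root_nonunit : residual_root_criterion -> nonunit_criterion.
Proof.
move=> hF g g0; have [u [b [p [bug ugp Fb]]]] := hF g g0.
by exists u, b; split=> //; apply: in_pAp_loc_nonunit ugp Fb.
Qed.

Lemma nonunit_residual_root : nonunit_criterion -> residual_root_criterion.
Proof.
move=> hF g g0; have [u [b [bug Fb_nonunit]]] := hF g g0.
have [p [ugp Fb]] := loc_nonunit_in_pAp (in_loc_evalK F bug) Fb_nonunit.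
by exists u, b, p.
Qed.

End Density.

Theorem mainTheorem8 (A : idomainType) (F : {poly A}) (hF : (1 < size F)%N) :
  (forall p : prime_idealr A,
      (Rel F p <-> res_has_root F p) /\
      (res_has_root F p <->
         exists g : A, g \notin p /\
           exists b : {fraction A}, in_loc g b /\ in_pAp p (evalK F b)))
  /\
  (zdense (Rel F) <->
     (forall g : A, g != 0 ->
        exists (u : A) (b : {fraction A}),
          in_loc (u * g) b /\ ~ loc_unit (u * g) (evalK F b)))
  /\
  ((forall g : A, g != 0 ->
        exists (u : A) (b : {fraction A}),
          in_loc (u * g) b /\ ~ loc_unit (u * g) (evalK F b))
   <->
   (forall g : A, g != 0 ->
        exists (u : A) (b : {fraction A}) (p : prime_idealr A),
          [/\ in_loc (u * g) b, u * g \notin p & in_pAp p (evalK F b)])).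
Proof.
split=> [p|].
  split; first exact: iff_trans (Rel_root_modP F p) (iff_sym (res_has_rootP F p)).
  exact: iff_trans (res_has_rootP F p) (root_mod_locP F p).
split; split.
- by move/zdense_residual_root/residual_root_nonunit.
- by move/nonunit_residual_root/residual_root_zdense.
- exact: nonunit_residual_root.
- exact: residual_root_nonunit.
Qed.
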